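(* Assume (H4). Let $M,N\in\mathbb{N}$. The operator $T_{M,N}\colon X_{M}\to X_{M}$ has the same nonzero eigenvalues, with the same geometric and partial multiplicities, as the operator $\widehat{T}_{M,N}:=P_{M}T_{M,N}R_{M}\colon\widetilde{X}\to\widetilde{X}$. Moreover, if $\Phi\in X_{M}$ is an eigenvector of $T_{M,N}$ associated to a nonzero eigenvalue $\mu$, then $P_{M}\Phi\in\widetilde{X}$ is an eigenvector of $\widehat{T}_{M,N}$ associated to the same eigenvalue $\mu$.
   Context: Let $d\ge 1$ be an integer and $\tau>0$, $h\ge\tau$ real. $X$, $X^{+}$, $X^{\pm}$ are real normed spaces of functions $[-\tau,0]\to\mathbb{R}^{d}$, $[0,h]\to\mathbb{R}^{d}$, $[-\tau,h]\to\mathbb{R}^{d}$, respectively. For a function $u$ on $[-\tau,h]$, $u_{h}(\theta):=u(h+\theta)$, $\theta\in[-\tau,0]$. $V\colon X\times X^{+}\to X^{\pm}$ and $\mathcal{F}_{s}\colon X^{\pm}\to X^{+}$ are linear with $V(\phi,z)|_{[-\tau,0]}=\phi$. Let $\widetilde{X}\subseteq X$ and $\widetilde{X}^{+}\subseteq X^{+}$ be linear subspaces. For $M\in\mathbb{N}$, $X_{M}$ is a finite-dimensional space, $R_{M}\colon\widetilde{X}\to X_{M}$, $P_{M}\colon X_{M}\to X$ are linear with $R_{M}P_{M}=I_{X_{M}}$, $\mathcal{L}_{M}:=P_{M}R_{M}$, and $\Pi_{M}$ is the range of $P_{M}$. For $N\in\mathbb{N}$, analogously $X_{N}^{+}$,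 $R_{N}^{+}\colon\widetilde{X}^{+}\to X_{N}^{+}$, $P_{N}^{+}\colon X_{N}^{+}\to X^{+}$ with $R_{N}^{+}P_{N}^{+}=I_{X_{N}^{+}}$, and $\Pi_{N}^{+}$ the range of $P_{N}^{+}$. The operator $T_{M,N}\colon X_{M}\to X_{M}$ is defined by $T_{M,N}\Phi:=R_{M}V(P_{M}\Phi,P_{N}^{+}Z^{\ast})_{h}$, where $Z^{\ast}\in X_{N}^{+}$ is the (assumed unique) solution of $Z=R_{N}^{+}\mathcal{F}_{s}V(P_{M}\Phi,P_{N}^{+}Z)$. Hypothesis (H4): for all $M,N\in\mathbb{N}$, $\Pi_{M}\subseteq\Pi_{M+1}$, $\Pi_{N}^{+}\subseteq\Pi_{N+1}^{+}$, $\Pi_{M}\subseteq\widetilde{X}$, $\Pi_{N}^{+}\subseteq\widetilde{X}^{+}$, and for all $(\phi,z)\in\Pi_{M}\times\Pi_{N}^{+}$, $V(\phi,z)_{h}\in\widetilde{X}$ and $\mathcal{F}_{s}V(\phi,z)\in\widetilde{X}^{+}$. A partial multiplicity of an eigenvalue is the length of an associated Jordan chain. *)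

From HB Require Import structures.
From mathcomp Require Import all_boot all_order all_algebra.
From mathcomp Require Import boolp classical_sets functions reals.
Set Implicit Arguments. Unset Strict Implicit. Unset Printing Implicit Defensive.
Import Order.TTheory GRing.Theory Num.Theory.
Local Open Scope ring_scope.

(* A complex vector is a pair (u, v) standing for u + i v; a complex   *)
(* scalar is a pair (a, b) standing for a + i b.                        *)

Definition cscale (R : numDomainType) (U : lmodType R) (mu : R * R) (x : U * U)
  : U * U :=
  (mu.1 *: x.1 - mu.2 *: x.2, mu.1 *: x.2 + mu.2 *: x.1).

Definition cadd (R : numDomainType) (U : lmodType R) (x y : U * U) : U * U :=
  (x.1 + y.1, x.2 + y.2).

Definition cshift (R : numDomainType) (U : lmodType R) (A : U -> U)
  (mu : R * R) (x : U * U) : U * U :=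
  ((A x.1, A x.2).1 - (cscale mu x).1, (A x.1, A x.2).2 - (cscale mu x).2).

Definition cshiftn (R : numDomainType) (U : lmodType R) (A : U -> U)
  (mu : R * R) (k : nat) (x : U * U) : U * U := iter k (cshift A mu) x.

Definition cin (R : numDomainType) (U : lmodType R) (S : set U) (x : U * U) :=
  S x.1 /\ S x.2.

Definition cnonzero (R : numDomainType) (U : lmodType R) (x : U * U) :=
  x <> (0, 0).

Definition is_eigenvector (R : numDomainType) (U : lmodType R) (S : set U)
  (A : U -> U) (mu : R * R) (x : U * U) :=
  cin S x /\ cnonzero x /\ cshift A mu x = (0, 0).

Definition is_eigenvalue (R : numDomainType) (U : lmodType R) (S : set U)
  (A : U -> U) (mu : R * R) :=
  exists x, is_eigenvector S A mu x.

Definition cindep (R : numDomainType) (U : lmodType R) (n : nat)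
  (x : 'I_n -> U * U) :=
  forall c : 'I_n -> R * R,
    (\sum_(i < n) (cscale (c i) (x i)).1 = 0 /\
     \sum_(i < n) (cscale (c i) (x i)).2 = 0) ->
    forall i, c i = (0, 0).

Definition gker_dim_ge (R : numDomainType) (U : lmodType R) (S : set U)
  (A : U -> U) (mu : R * R) (k n : nat) :=
  exists x : 'I_n -> U * U,
    (forall i, cin S (x i) /\ cshiftn A mu k (x i) = (0, 0)) /\ cindep x.

Definition geom_mult_ge (R : numDomainType) (U : lmodType R) (S : set U)
  (A : U -> U) (mu : R * R) (n : nat) := gker_dim_ge S A mu 1 n.

Definition jordan_chain (R : numDomainType) (U : lmodType R) (S : set U)
  (A : U -> U) (mu : R * R) (k : nat) (x : nat -> U * U) :=
  (0 < k)%N /\ cnonzero (x 0%N) /\ (forall i, (i < k)%N -> cin S (x i)) /\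
  cshift A mu (x 0%N) = (0, 0) /\
  (forall i, (0 < i < k)%N -> cshift A mu (x i) = x i.-1).

Definition has_partial_mult (R : numDomainType) (U : lmodType R) (S : set U)
  (A : U -> U) (mu : R * R) (k : nat) :=
  exists x, jordan_chain S A mu k x.

(* Function spaces.  A function [a,b] -> R^d is encoded as a total      *)
(* function R -> 'rV[R]_d that vanishes outside [a,b].                  *)

Definition fn (R : realType) (d : nat) := R -> 'rV[R]_d.

Definition supported_in (R : realType) (d : nat) (a b : R) (f : fn R d) :=
  forall t, ~~ (a <= t <= b) -> f t = 0.

Definition fn_subspace (R : realType) (d : nat) (a b : R) (S : set (fn R d)) :=
  S 0 /\ (forall f g (c : R), S f -> S g -> S (c *: f + g)) /\
  (forall f, S f -> supported_in a b f).

Definition subspace_of (R : numDomainType) (U : lmodType R) (S : set U) :=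
  S 0 /\ (forall f g (c : R), S f -> S g -> S (c *: f + g)).

Definition shift_h (R : realType) (d : nat) (tau h : R) (u : fn R d) : fn R d :=
  fun theta => if (- tau <= theta <= 0) then u (h + theta) else 0.

Definition linear_on (R : numDomainType) (U W : lmodType R) (S : set U)
  (f : U -> W) :=
  forall x y (c : R), S x -> S y -> f (c *: x + y) = c *: f x + f y.

Definition linear_on2 (R : numDomainType) (U1 U2 W : lmodType R)
  (S1 : set U1) (S2 : set U2) (f : U1 -> U2 -> W) :=
  forall x1 y1 x2 y2 (c : R), S1 x1 -> S1 y1 -> S2 x2 -> S2 y2 ->
    f (c *: x1 + y1) (c *: x2 + y2) = c *: f x1 x2 + f y1 y2.

From HB Require Import structures.
From mathcomp Require Import all_boot all_order all_algebra.
From mathcomp Require Import boolp classical_sets functions reals.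
Set Implicit Arguments. Unset Strict Implicit. Unset Printing Implicit Defensive.
Import Order.TTheory GRing.Theory Num.Theory.
Local Open Scope ring_scope.
Local Open Scope classical_set_scope.

(* Since R_M P_M = id, P_M is injective and intertwines T with
   T^ = P_M T R_M, so it carries eigenvectors, Jordan chains and generalized
   kernels of T - mu injectively (and preserving linear independence) to
   those of T^ - mu.  Conversely T^ takes values in range P_M, so for mu <> 0,
   (T^ - mu) x in range P_M forces mu x = T^ x - (T^ - mu) x in range P_M;
   hence every generalized eigenvector of T^ for mu is the image under P_M of
   one of T. *)

Definition cmap {T U : Type} (f : T -> U) (x : T * T) : U * U := (f x.1, f x.2).

Lemma cscale_conj (R : numDomainType) (U : lmodType R) (a b : R) (x : U * U) :
  cscale (a, - b) (cscale (a, b) x) = (a ^+ 2 + b ^+ 2) *: x.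
Proof.
case: x => x1 x2; rewrite /cscale /= !scaleNr opprK; congr pair.
  rewrite scalerBr scalerDr !scalerA [b * a]mulrC addrA subrK.
  by rewrite -scalerDl -!expr2.
rewrite scalerDr scalerBr !scalerA [b * a]mulrC opprB [_ - _ *: x1]addrC.
by rewrite addrA addrK -scalerDl -!expr2.
Qed.

Lemma sqr_add_neq0 (R : realDomainType) (a b : R) :
  (a, b) <> (0, 0) -> a ^+ 2 + b ^+ 2 != 0.
Proof.
move=> ab; rewrite paddr_eq0 ?sqr_ge0 // !sqrf_eq0.
by apply/negP => /andP[/eqP a0 /eqP b0]; apply: ab; rewrite a0 b0.
Qed.

Section ShiftedOperator.
Variables (R : numDomainType) (U : lmodType R) (S : set U) (A : U -> U).
Variable mu : R * R.

Lemma cscale_cshift (x : U * U) : cscale mu x = cmap A x - cshift A mu x.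
Proof.
rewrite /cshift /cmap; case: (cscale mu x) => c1 c2 /=.
by rewrite -[RHS]/(A x.1 - (A x.1 - c1), A x.2 - (A x.2 - c2)) !subKr.
Qed.

Lemma is_eigenvalue_partial_mult1 :
  is_eigenvalue S A mu <-> has_partial_mult S A mu 1.
Proof.
split=> [[x [xS [nz x0]]] | [x [_ [nz [xS [x0 _]]]]]].
  by exists (fun=> x); do 3!split=> //; split=> // -[|i].
by exists (x 0%N); split; first exact: xS.
Qed.

Lemma eq_jordan_chain (k : nat) (x y : nat -> U * U) :
  (forall i, (i < k)%N -> x i = y i) ->
  jordan_chain S A mu k x -> jordan_chain S A mu k y.
Proof.
move=> xy [k0 [nz [xS [x0 xS']]]]; have x0y := xy 0%N k0.
split=> //; split; first by rewrite -x0y.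
split; first by move=> i ik; rewrite -xy //; apply: xS.
split; first by rewrite -x0y.
move=> i /andP[i0 ik]; rewrite -!xy ?xS' ?i0 //.
exact: leq_ltn_trans (leq_pred i) ik.
Qed.

End ShiftedOperator.

Section LinearComplexification.
Variables (R : numDomainType) (W U : lmodType R) (f : {linear W -> U}).

Lemma cmapB (x y : W * W) : cmap f (x - y) = cmap f x - cmap f y.
Proof. by rewrite /cmap /= !linearB. Qed.

Lemma cmapZ (a : R) (x : W * W) : cmap f (a *: x) = a *: cmap f x.
Proof. by rewrite /cmap /= !linearZ. Qed.

Lemma cmap_cscale (mu : R * R) (x : W * W) :
  cmap f (cscale mu x) = cscale mu (cmap f x).
Proof. by rewrite /cmap /cscale /= linearB linearD !linearZ. Qed.

Lemma cmap0 : cmap f (0, 0) = (0, 0).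
Proof. by rewrite /cmap /= linear0. Qed.

End LinearComplexification.

Section ConjugateOperators.
Variables (R : realFieldType) (W U : lmodType R).
Variables (P : {linear W -> U}) (Q : U -> W) (B : W -> W) (A : U -> U).
Variable S : set U.
Hypothesis PK : cancel P Q.
Hypothesis AE : forall u, A u = P (B (Q u)).
Hypothesis PS : forall w, S (P w).

Lemma cmapK : cancel (cmap P) (cmap Q).
Proof. by case=> x1 x2; rewrite /cmap /= !PK. Qed.

Lemma cmap_inj : injective (cmap P).
Proof. exact: can_inj cmapK. Qed.

Lemma cmap_eq0 (x : W * W) : cmap P x = (0, 0) <-> x = (0, 0).
Proof. by split=> [|->]; [rewrite -(cmap0 P) => /cmap_inj | exact: cmap0]. Qed.

Lemma cmap_in_range (x : U * U) : range (cmap P) x -> cmap P (cmap Q x) = x.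
Proof. by case=> y _ <-; rewrite cmapK. Qed.

Lemma cshift_cmap (mu : R * R) (x : W * W) :
  cshift A mu (cmap P x) = cmap P (cshift B mu x).
Proof. by rewrite /cshift -cmap_cscale /cmap /= !AE !PK !linearB. Qed.

Lemma cshiftn_cmap (mu : R * R) (k : nat) (x : W * W) :
  cshiftn A mu k (cmap P x) = cmap P (cshiftn B mu k x).
Proof. by elim: k => //= k IHk; rewrite IHk cshift_cmap. Qed.

Lemma cindep_cmap (n : nat) (y : 'I_n -> W * W) :
  cindep (fun i => cmap P (y i)) <-> cindep y.
Proof.
have sum1 c : \sum_(i < n) (cscale (c i) (cmap P (y i))).1 =
               P (\sum_(i < n) (cscale (c i) (y i)).1).
  by rewrite linear_sum; apply: eq_bigr => i _; rewrite -cmap_cscale.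
have sum2 c : \sum_(i < n) (cscale (c i) (cmap P (y i))).2 =
               P (\sum_(i < n) (cscale (c i) (y i)).2).
  by rewrite linear_sum; apply: eq_bigr => i _; rewrite -cmap_cscale.
have P_eq0 w : P w = 0 -> w = 0.
  by move=> Pw; apply: (can_inj PK); rewrite Pw linear0.
split=> indep c [s1 s2]; apply: indep.
  by rewrite sum1 sum2 s1 s2 linear0.
by split; apply: P_eq0; [rewrite -sum1 | rewrite -sum2].
Qed.

Lemma jordan_chain_cmap (mu : R * R) (k : nat) (y : nat -> W * W) :
  jordan_chain setT B mu k y <-> jordan_chain S A mu k (cmap P \o y).
Proof.
split=> [[k0 [nz [_ [y0 yS]]]] | [k0 [nz [_ [x0 xS]]]]]; do !split=> //.
- by move/cmap_eq0.
- exact: PS.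
- exact: PS.
- by rewrite /= cshift_cmap y0 cmap0.
- by move=> i ik; rewrite /= cshift_cmap yS.
- by move=> y0; apply: nz; rewrite /= y0 cmap0.
- by apply/cmap_eq0; rewrite -cshift_cmap.
- by move=> i ik; apply: cmap_inj; rewrite -cshift_cmap xS.
Qed.

Lemma is_eigenvector_cmap (mu : R * R) (x : W * W) :
  is_eigenvector setT B mu x -> is_eigenvector S A mu (cmap P x).
Proof.
case=> _ [nz x0]; split; first by split; apply: PS.
by split; [move/cmap_eq0 | rewrite cshift_cmap x0 cmap0].
Qed.

Section NonzeroEigenvalue.
Variable mu : R * R.
Hypothesis mu_neq0 : mu <> (0, 0).

Lemma range_cscale (x : U * U) :
  range (cmap P) (cscale mu x) -> range (cmap P) x.
Proof.
case: mu mu_neq0 => a b ab [y _ Py].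
have n_neq0 := sqr_add_neq0 ab.
exists ((a ^+ 2 + b ^+ 2)^-1 *: cscale (a, - b) y) => //.
by rewrite cmapZ cmap_cscale Py cscale_conj scalerA mulVf // scale1r.
Qed.

Lemma range_cshift (x : U * U) :
  range (cmap P) (cshift A mu x) -> range (cmap P) x.
Proof.
case=> z _ Pz; apply: range_cscale.
exists (cmap (B \o Q) x - z) => //.
by rewrite cmapB Pz (cscale_cshift A) /cmap /= !AE.
Qed.

Lemma range_cshiftn (k : nat) (x : U * U) :
  range (cmap P) (cshiftn A mu k x) -> range (cmap P) x.
Proof.
by elim: k x => // k IHk x; rewrite /cshiftn iterSr => /IHk /range_cshift.
Qed.

Lemma range_gker (k : nat) (x : U * U) :
  cshiftn A mu k x = (0, 0) -> range (cmap P) x.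
Proof.
move=> xk; apply: (@range_cshiftn k); rewrite xk.
by exists (0, 0); last exact: cmap0.
Qed.

Lemma has_partial_mult_conj (k : nat) :
  has_partial_mult setT B mu k <-> has_partial_mult S A mu k.
Proof.
split=> [[y /jordan_chain_cmap chain] | [x chain]].
  by exists (cmap P \o y).
have x_range i : (i < k)%N -> range (cmap P) (x i).
  case: chain => _ [_ [_ [x0 xS]]].
  elim: i => [_ | i IHi ik]; first by apply: (@range_gker 1).
  by apply: range_cshift; rewrite xS //; apply: IHi (ltnW ik).
exists (cmap Q \o x); apply/jordan_chain_cmap; apply: eq_jordan_chain chain.
by move=> i ik; rewrite /= cmap_in_range //; apply: x_range.
Qed.

Lemma gker_dim_ge_conj (k n : nat) :
  gker_dim_ge setT B mu k n <-> gker_dim_ge S A mu k n.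
Proof.
split=> [[y [ker indep]] | [x [ker indep]]].
  exists (fun i => cmap P (y i)); split; last exact/cindep_cmap.
  move=> i; rewrite cshiftn_cmap (ker i).2 cmap0.
  by split=> //; split; apply: PS.
have xE : x = (fun i => cmap P (cmap Q (x i))).
  apply: funext => i; rewrite cmap_in_range //.
  exact: (@range_gker k) (ker i).2.
rewrite xE in ker indep; move/cindep_cmap: indep => indep.
exists (fun i => cmap Q (x i)); split=> // i; split=> //.
by apply/cmap_eq0; rewrite -cshiftn_cmap (ker i).2.
Qed.

End NonzeroEigenvalue.
End ConjugateOperators.

Theorem proposition4p4
  (R : realType) (d : nat) (tau h : R) (Htau : 0 < tau) (Hh : tau <= h)
  (* X, X^+, X^{+-} and the subspaces X~ of X, X~^+ of X^+ *)
  (X Xp Xpm Xt Xtp : set (fn R d))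
  (HX : fn_subspace (- tau) 0 X) (HXp : fn_subspace 0 h Xp)
  (HXpm : fn_subspace (- tau) h Xpm)
  (HXt : subspace_of Xt) (HXtX : Xt `<=` X)
  (HXtp : subspace_of Xtp) (HXtpXp : Xtp `<=` Xp)
  (* V and F_s *)
  (V : fn R d -> fn R d -> fn R d) (Fs : fn R d -> fn R d)
  (HVin : forall phi z, X phi -> Xp z -> Xpm (V phi z))
  (HVlin : linear_on2 X Xp V)
  (HVrestr : forall phi z t, X phi -> Xp z -> - tau <= t <= 0 -> V phi z t = phi t)
  (HFsin : forall u, Xpm u -> Xp (Fs u))
  (HFslin : linear_on Xpm Fs)
  (* discretization spaces and restriction/prolongation operators *)
  (XM : nat -> vectType R) (RM : forall M, fn R d -> XM M)
  (PM : forall M, XM M -> fn R d)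
  (XN : nat -> vectType R) (RN : forall N, fn R d -> XN N)
  (PN : forall N, XN N -> fn R d)
  (HRMlin : forall M, linear_on Xt (RM M))
  (HPMlin : forall M, linear (PM M)) (HPMin : forall M Phi, X (PM M Phi))
  (HRPM : forall M Phi, RM M (PM M Phi) = Phi)
  (HRNlin : forall N, linear_on Xtp (RN N))
  (HPNlin : forall N, linear (PN N)) (HPNin : forall N Z, Xp (PN N Z))
  (HRPN : forall N Z, RN N (PN N Z) = Z)
  (* Hypothesis (H4) *)
  (H4 : forall M N,
      range (PM M) `<=` range (PM M.+1) /\
      range (PN N) `<=` range (PN N.+1) /\
      range (PM M) `<=` Xt /\ range (PN N) `<=` Xtp /\
      (forall phi z, range (PM M) phi -> range (PN N) z ->
         Xt (shift_h tau h (V phi z)) /\ Xtp (Fs (V phi z))))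
  (M N : nat)
  (* uniqueness of the solution Z* of the fixed-point equation *)
  (Huniq : forall Phi : XM M, exists! Z : XN N,
      Z = RN N (Fs (V (PM M Phi) (PN N Z))))
  (* T = T_{M,N} *)
  (T : XM M -> XM M)
  (HT : forall Phi : XM M, exists Z : XN N,
      Z = RN N (Fs (V (PM M Phi) (PN N Z))) /\
      T Phi = RM M (shift_h tau h (V (PM M Phi) (PN N Z)))) :
  let That : fn R d -> fn R d := fun u => PM M (T (RM M u)) in
  (forall mu : R * R, mu <> (0, 0) ->
     (is_eigenvalue setT T mu <-> is_eigenvalue Xt That mu) /\
     (forall n, geom_mult_ge setT T mu n <-> geom_mult_ge Xt That mu n) /\
     (forall k, has_partial_mult setT T mu k <-> has_partial_mult Xt That mu k) /\
     (forall k n, gker_dim_ge setT T mu k n <-> gker_dim_ge Xt That mu k n)) /\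
  (forall (mu : R * R) (Phi : XM M * XM M), mu <> (0, 0) ->
     is_eigenvector setT T mu Phi ->
     is_eigenvector Xt That mu (PM M Phi.1, PM M Phi.2)).
Proof.
move=> That.
pose PMl : {linear XM M -> fn R d} :=
  HB.pack (PM M) (GRing.isLinear.Build _ _ _ _ (PM M) (HPMlin M)).
have PMK : cancel PMl (RM M) := HRPM M.
have ThatE u : That u = PMl (T (RM M u)) by [].
have PM_Xt Phi : Xt (PMl Phi) by apply: (H4 M N).2.2.1; exists Phi.
split=> [mu mu0 | mu Phi _]; last exact: (is_eigenvector_cmap PMK ThatE PM_Xt).
have pm_conj := has_partial_mult_conj PMK ThatE PM_Xt mu0.
have gk_conj := gker_dim_ge_conj PMK ThatE PM_Xt mu0.
split; first by rewrite !is_eigenvalue_partial_mult1.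
by split=> [n | ]; [exact: gk_conj | split].
Qed.
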